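(* Fix a reflection matrix $\mathbf\Phi$ and suppose problem (SDR1.2) has an optimal solution. Then there exists an optimal solution $(\{\mathbf W_k^\star\},\mathbf R_0^\star)$ of (SDR1.2) with $\mathbf R_0^\star=\mathbf 0$.
   Context: Let $M,N,K\ge1$ be integers and $\mathcal K=\{1,\dots,K\}$. Fixed data: $\mathbf G\in\mathbb C^{N\times M}$, $\mathbf h_{\mathrm d,k}\in\mathbb C^{M}$ and $\mathbf h_{\mathrm r,k}\in\mathbb C^{N}$ for $k\in\mathcal K$, thresholds $\Gamma_k>0$, noise powers $\sigma_k^2>0$, and a power budget $P_0>0$. A reflection matrix is $\mathbf\Phi=\mathrm{diag}(\mathbf v)$ with $\mathbf v\in\mathbb C^N$, $|v_n|=1$ for all $n$. For a given $\mathbf\Phi$ put $\mathbf h_k=\mathbf h_{\mathrm d,k}+\mathbf G^H\mathbf\Phi^H\mathbf h_{\mathrm r,k}$ and $\mathbf H_k=\mathbf h_k\mathbf h_k^H$. For Hermitian $\mathbf X\succeq\mathbf 0$ define $f(\mathbf X)=\mathrm{tr}\big((\mathbf G\mathbf X\mathbf G^H)^{-1}\big)$ if $\mathbf G\mathbf X\mathbf G^H$ is invertible and $f(\mathbf X)=+\infty$ otherwise. Problem (SDR1.2) (for fixed $\mathbf\Phi$): minimize $f\big(\sum_k\mathbf W_k+\mathbf R_0\big)$ over Hermitian $\mathbf W_k\succeq\mathbf 0$ ($k\in\mathcal K$) and $\mathbf R_0\succeq\mathbf 0$, subject to $(1+\tfrac1{\Gamma_k})\mathrm{tr}(\mathbf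 H_k\mathbf W_k)-\mathrm{tr}\big(\mathbf H_k(\sum_{i}\mathbf W_i+\mathbf R_0)\big)\ge\sigma_k^2$ for all $k$, and $\sum_k\mathrm{tr}(\mathbf W_k)+\mathrm{tr}(\mathbf R_0)\le P_0$. *)

(* Complex scalars: an arbitrary numClosedFieldType C
   (e.g. the complex numbers); the order on C is the usual partial order
   (x <= y iff y - x is a nonnegative real). *)
From HB Require Import structures.
From mathcomp Require Import all_boot all_order all_algebra.
Set Implicit Arguments. Unset Strict Implicit. Unset Printing Implicit Defensive.
Import Order.TTheory GRing.Theory Num.Theory.
Local Open Scope ring_scope.
Local Open Scope sesquilinear_scope.

Section SDR.
Variable C : numClosedFieldType.

Definition ctr m n (A : 'M[C]_(m, n)) : 'M[C]_(n, m) := A ^t*.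

Definition hermitian n (A : 'M[C]_n) : Prop := ctr A = A.

Definition psd n (A : 'M[C]_n) : Prop :=
  hermitian A /\ forall x : 'cV[C]_n, 0 <= (ctr x *m A *m x) 0 0.

(* extended values: None = +infinity *)
Definition ext_le (a b : option C) : Prop :=
  match a, b with
  | _, None => True
  | None, Some _ => False
  | Some x, Some y => x <= y
  end.

Definition fobj N M (G : 'M[C]_(N, M)) (X : 'M[C]_M) : option C :=
  let Y := G *m X *m ctr G in
  if Y \in unitmx then Some (\tr (invmx Y)) else None.

Definition Phi N (v : 'cV[C]_N) : 'M[C]_N := diag_mx v^T.

Definition heff N M (G : 'M[C]_(N, M)) (v : 'cV[C]_N)
  (hd : 'cV[C]_M) (hr : 'cV[C]_N) : 'cV[C]_M :=
  hd + ctr G *m ctr (Phi v) *m hr.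

Definition Hmat M (h : 'cV[C]_M) : 'M[C]_M := h *m ctr h.

Definition feasible N M K (G : 'M[C]_(N, M)) (v : 'cV[C]_N)
  (hd : 'I_K -> 'cV[C]_M) (hr : 'I_K -> 'cV[C]_N)
  (Gam sig2 : 'I_K -> C) (P0 : C)
  (W : 'I_K -> 'M[C]_M) (R0 : 'M[C]_M) : Prop :=
  (forall k, psd (W k)) /\ psd R0 /\
  (forall k,
     let H := Hmat (heff G v (hd k) (hr k)) in
     (1 + (Gam k)^-1) * \tr (H *m W k)
       - \tr (H *m (\sum_i W i + R0)) >= sig2 k) /\
  \sum_k \tr (W k) + \tr R0 <= P0.

Definition optimal N M K (G : 'M[C]_(N, M)) (v : 'cV[C]_N)
  (hd : 'I_K -> 'cV[C]_M) (hr : 'I_K -> 'cV[C]_N)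
  (Gam sig2 : 'I_K -> C) (P0 : C)
  (W : 'I_K -> 'M[C]_M) (R0 : 'M[C]_M) : Prop :=
  feasible G v hd hr Gam sig2 P0 W R0 /\
  forall W' R0', feasible G v hd hr Gam sig2 P0 W' R0' ->
    ext_le (fobj G (\sum_k W k + R0)) (fobj G (\sum_k W' k + R0')).

End SDR.

From Pilot Require Import Defs.
From HB Require Import structures.
From mathcomp Require Import all_boot all_order all_algebra.
Import Order.TTheory GRing.Theory Num.Theory.
Local Open Scope ring_scope.

(* Given an optimal solution ({W_k}, R0) of
   (SDR1.2), fold the dedicated sensing covariance R0 into one beamformer:
   W'_k0 = W_k0 + R0 and W'_k = W_k otherwise, with R0' = 0.
   - The total covariance sum_k W'_k + 0 equals sum_k W_k + R0, so the
     objective f and the total transmit power are unchanged.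
   - Each W'_k is PSD because PSD matrices are closed under addition.
   - In the SINR constraint of user k the interference term
     tr(H_k (sum_i W'_i)) is unchanged, while the useful-signal term can
     only grow: for k = k0 it gains (1 + 1/Gamma_k0) tr(H_k0 R0) >= 0,
     since tr(h h^H R) = h^H R h >= 0 for PSD R.
   Hence ({W'_k}, 0) is feasible with the same objective value as the
   optimum, so it is optimal. *)

Section PSD.
Variable C : numClosedFieldType.

Lemma psd0 n : psd (0 : 'M[C]_n).
Proof.
split; first by apply/matrixP => i j; rewrite !mxE rmorph0.
by move=> x; rewrite mulmx0 mul0mx mxE.
Qed.

Lemma psdD n (A B : 'M[C]_n) : psd A -> psd B -> psd (A + B).
Proof.
move=> [hA pA] [hB pB]; split.
  rewrite /Defs.hermitian in hA hB *; rewrite -[in RHS]hA -[in RHS]hB.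
  by apply/matrixP => i j; rewrite !mxE rmorphD.
by move=> x; rewrite mulmxDr mulmxDl mxE; apply: addr_ge0.
Qed.

(* tr(h h^H R) = h^H R h is a nonnegative real when R is PSD. *)
Lemma trace_Hmat_ge0 n (h : 'cV[C]_n) (R : 'M[C]_n) :
  psd R -> 0 <= \tr (Hmat h *m R).
Proof.
move=> [_ pR]; rewrite /Hmat -mulmxA mxtrace_mulC -mulmxA.
by rewrite /mxtrace big_ord1 mulmxA; apply: pR.
Qed.

End PSD.

Section Folding.
Variables (C : numClosedFieldType) (M K : nat).
Variables (W : 'I_K -> 'M[C]_M) (R0 : 'M[C]_M) (k0 : 'I_K).

Definition fold_beams (k : 'I_K) : 'M[C]_M :=
  if k == k0 then W k + R0 else W k.

Lemma sum_fold_beams : \sum_k fold_beams k = \sum_k W k + R0.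
Proof.
rewrite (bigD1 k0) //= [in RHS](bigD1 k0) //= /fold_beams eqxx.
rewrite -addrA [R0 + _]addrC addrA; congr (_ + _ + _).
by apply: eq_bigr => i /negPf ->.
Qed.

Lemma trace_sum_fold_beams :
  \sum_k \tr (fold_beams k) = \sum_k \tr (W k) + \tr R0.
Proof. by rewrite -!raddf_sum /= sum_fold_beams raddfD. Qed.

End Folding.

Arguments fold_beams {C M K} W R0 k0 k.

Lemma feasible_fold_beams (C : numClosedFieldType) N M K
    (G : 'M[C]_(N, M)) (v : 'cV[C]_N)
    (hd : 'I_K -> 'cV[C]_M) (hr : 'I_K -> 'cV[C]_N)
    (Gam sig2 : 'I_K -> C) (P0 : C) (W : 'I_K -> 'M[C]_M) (R0 : 'M[C]_M)
    (k0 : 'I_K) :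
  0 < Gam k0 ->
  feasible G v hd hr Gam sig2 P0 W R0 ->
  feasible G v hd hr Gam sig2 P0 (fold_beams W R0 k0) 0.
Proof.
move=> Gam_k0_gt0 [psdW [psdR [sinr power]]].
split; first by move=> k; rewrite /fold_beams; case: ifP => _ //; apply: psdD.
split; first exact: psd0.
split; last by rewrite trace_sum_fold_beams mxtrace0 addr0.
move=> k /=; rewrite addr0 sum_fold_beams.
apply: (le_trans (sinr k)); rewrite lerD2r /fold_beams; case: eqP => [->|_] //.
rewrite mulmxDr mxtraceD mulrDr lerDl.
apply: mulr_ge0; last exact: trace_Hmat_ge0.
by rewrite addr_ge0 // invr_ge0 ltW.
Qed.

Theorem proposition2 (C : numClosedFieldType) (M N K : nat)
  (HM : (1 <= M)%N) (HN : (1 <= N)%N) (HK : (1 <= K)%N)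
  (G : 'M[C]_(N, M)) (hd : 'I_K -> 'cV[C]_M) (hr : 'I_K -> 'cV[C]_N)
  (Gam sig2 : 'I_K -> C) (P0 : C)
  (HGam : forall k, 0 < Gam k) (Hsig : forall k, 0 < sig2 k) (HP0 : 0 < P0)
  (v : 'cV[C]_N) (Hv : forall n, `|v n 0| = 1) :
  (exists (W : 'I_K -> 'M[C]_M) (R0 : 'M[C]_M),
      optimal G v hd hr Gam sig2 P0 W R0) ->
  exists W : 'I_K -> 'M[C]_M, optimal G v hd hr Gam sig2 P0 W 0.
Proof.
move=> [W [R0 [feasWR0 optWR0]]].
pose k0 : 'I_K := Ordinal HK.
exists (fold_beams W R0 k0); split; first exact: feasible_fold_beams (HGam k0) feasWR0.
by move=> W' R0' feas'; rewrite addr0 sum_fold_beams; apply: optWR0.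
Qed.
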